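(* For the system $S'=\Lambda-\beta\frac{SB}{B+D}-(\mu+\psi)S+wR$, $V'=\psi S-\sigma\beta\frac{VB}{B+D}-\mu V$, $I'=\beta\frac{SB}{B+D}+\sigma\beta\frac{VB}{B+D}-(\mu+\gamma)I$, $R'=\gamma I-(\mu+w)R$, $B'=\eta I-\delta B$, there exist parameter values for which ${\cal R}_0<1$ and there exist exactly two positive steady states, one stable and one unstable.
   Context: All parameters $\Lambda,\beta,D,\mu,\psi,w,\sigma,\gamma,\eta,\delta$ are positive constants. The disease-free equilibrium is $(S_0,V_0,0,0,0)$ with $S_0=\frac{\Lambda}{\mu+\psi}$, $V_0=\frac{\Lambda\psi}{\mu(\mu+\psi)}$, and the basic reproductive ratio is ${\cal R}_0=\frac{\eta\beta(S_0+\sigma V_0)}{D\delta(\mu+\gamma)}$. A positive steady state is a steady state with all components positive. *)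

From HB Require Import structures.
From mathcomp Require Import all_boot all_order all_algebra complex.
From mathcomp Require Import Rstruct.
From Stdlib Require Import Reals.
Set Implicit Arguments. Unset Strict Implicit. Unset Printing Implicit Defensive.
Import Order.TTheory GRing.Theory Num.Theory.
Local Open Scope ring_scope.

Notation R := Rdefinitions.R.

Record params := Params {
  pLambda : R; pbeta : R; pD : R; pmu : R; ppsi : R;
  pw : R; psigma : R; pgamma : R; peta : R; pdelta : R }.

Definition params_pos (p : params) : Prop :=
  0 < pLambda p /\ 0 < pbeta p /\ 0 < pD p /\ 0 < pmu p /\ 0 < ppsi p /\
  0 < pw p /\ 0 < psigma p /\ 0 < pgamma p /\ 0 < peta p /\ 0 < pdelta p.

Record state := State { xS : R; xV : R; xI : R; xR : R; xB : R }.

Definition state_pos (x : state) : Prop :=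
  0 < xS x /\ 0 < xV x /\ 0 < xI x /\ 0 < xR x /\ 0 < xB x.

Section Model.
Variable p : params.
Local Notation Lambda := (pLambda p). Local Notation beta := (pbeta p).
Local Notation D := (pD p). Local Notation mu := (pmu p).
Local Notation psi := (ppsi p). Local Notation w := (pw p).
Local Notation sigma := (psigma p). Local Notation gamma := (pgamma p).
Local Notation eta := (peta p). Local Notation delta := (pdelta p).

Definition fS (x : state) : R :=
  Lambda - beta * (xS x * xB x / (xB x + D)) - (mu + psi) * xS x + w * xR x.
Definition fV (x : state) : R :=
  psi * xS x - sigma * beta * (xV x * xB x / (xB x + D)) - mu * xV x.
Definition fI (x : state) : R :=
  beta * (xS x * xB x / (xB x + D)) + sigma * beta * (xV x * xB x / (xB x + D))
  - (mu + gamma) * xI x.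
Definition fR (x : state) : R := gamma * xI x - (mu + w) * xR x.
Definition fB (x : state) : R := eta * xI x - delta * xB x.

Definition steady_state (x : state) : Prop :=
  fS x = 0 /\ fV x = 0 /\ fI x = 0 /\ fR x = 0 /\ fB x = 0.

Definition positive_steady_state (x : state) : Prop :=
  steady_state x /\ state_pos x.

(* disease-free equilibrium components and basic reproductive ratio *)
Definition S0 : R := Lambda / (mu + psi).
Definition V0 : R := Lambda * psi / (mu * (mu + psi)).
Definition basic_repr_ratio : R := eta * beta * (S0 + sigma * V0) / (D * delta * (mu + gamma)).

Definition jac_entry (x : state) (i j : nat) : R :=
  let S := xS x in let V := xV x in let B := xB x in
  let g := B / (B + D) in let g' := D / ((B + D) ^+ 2) in
  match i, j with
  | 0, 0 => - beta * g - (mu + psi)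
  | 0, 3 => w
  | 0, 4 => - beta * S * g'
  | 1, 0 => psi
  | 1, 1 => - sigma * beta * g - mu
  | 1, 4 => - sigma * beta * V * g'
  | 2, 0 => beta * g
  | 2, 1 => sigma * beta * g
  | 2, 2 => - (mu + gamma)
  | 2, 4 => beta * S * g' + sigma * beta * V * g'
  | 3, 2 => gamma
  | 3, 3 => - (mu + w)
  | 4, 2 => eta
  | 4, 4 => - delta
  | _, _ => 0
  end%N.

Definition jacobian (x : state) : 'M[R]_5 :=
  \matrix_(i < 5, j < 5) jac_entry x i j.

Definition jacobianC (x : state) : 'M[R[i]]_5 :=
  map_mx (fun r : R => (r%:C)%C) (jacobian x).

(* (linear, local asymptotic) stability: all eigenvalues of the Jacobian
   have negative real part; instability: some eigenvalue has positive real part *)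
Definition stable_ss (x : state) : Prop :=
  forall l : R[i], eigenvalue (jacobianC x) l -> complex.Re l < 0.
Definition unstable_ss (x : state) : Prop :=
  exists l : R[i], eigenvalue (jacobianC x) l /\ 0 < complex.Re l.

End Model.

(* At a steady state, B determines I = delta B / eta, then R, S and V, and the
   remaining equation fI = 0 reduces, after clearing positive denominators, to a
   quadratic endemic_poly B = 0 whose value at B = 0 is a positive multiple of
   1 - R0.  For the parameters p0 this quadratic is a positive multiple of
   (B - 5) (B - 1/10): hence R0 < 1 and there are exactly two endemic equilibria.
   The total population N = S + V + I + R obeys N' = Lambda - mu N, so the
   characteristic polynomial of the Jacobian has the factor l + mu.  At B = 5 the
   complementary quartic satisfies the Routh-Hurwitz conditions, so all eigenvalues
   have negative real part; at B = 1/10 it is negative at 0 and positive at 1, which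
   gives a positive real eigenvalue. *)

From HB Require Import structures.
From mathcomp Require Import all_boot all_order all_algebra complex.
From mathcomp Require Import Rstruct.
From Stdlib Require Import Rdefinitions.
From Stdlib Require Lra.
From mathcomp Require Import ring lra.
Set Implicit Arguments. Unset Strict Implicit. Unset Printing Implicit Defensive.
Import Order.TTheory GRing.Theory Num.Theory.
Local Open Scope ring_scope.

Lemma ord5P (P : 'I_5 -> Prop) : P 0 -> P 1 -> P 2 -> P 3 -> P 4 -> forall i, P i.
Proof.
move=> P0 P1 P2 P3 P4 [[|[|[|[|[|i]]]]] hi] //.
- by have -> : Ordinal hi = 0 by apply: val_inj.
- by have -> : Ordinal hi = 1 by apply: val_inj.
- by have -> : Ordinal hi = 2 by apply: val_inj.
- by have -> : Ordinal hi = 3 by apply: val_inj.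
- by have -> : Ordinal hi = 4 by apply: val_inj.
Qed.

Lemma sum_ord5 (V : nmodType) (F : 'I_5 -> V) :
  \sum_(k < 5) F k = F 0 + F 1 + F 2 + F 3 + F 4.
Proof.
rewrite !big_ord_recr big_ord0 /= add0r.
by congr (_ + _ + _ + _ + _); congr F; apply: val_inj.
Qed.

Definition jac_pattern (i j : nat) : bool :=
  match i, j with
  | 0, (0 | 3 | 4) | 1, (0 | 1 | 4) | 2, (0 | 1 | 2 | 4) | 3, (2 | 3) | 4, (2 | 4) => true
  | _, _ => false
  end%N.

Section SparseEigen.
Variables (K : fieldType) (A : 'M[K]_5).
Hypothesis A_pattern : forall i j : 'I_5, ~~ jac_pattern i j -> A i j = 0.

Let A_zeros := (@A_pattern 3 0 isT, @A_pattern 4 0 isT, @A_pattern 0 1 isT,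
  @A_pattern 3 1 isT, @A_pattern 4 1 isT, @A_pattern 0 2 isT, @A_pattern 1 2 isT,
  @A_pattern 1 3 isT, @A_pattern 2 3 isT, @A_pattern 4 3 isT, @A_pattern 3 4 isT).

Lemma jac_mulmxE (w : 'rV[K]_5) :
  let wA := w *m A in
  [/\ wA 0 0 = w 0 0 * A 0 0 + w 0 1 * A 1 0 + w 0 2 * A 2 0,
      wA 0 1 = w 0 1 * A 1 1 + w 0 2 * A 2 1,
      wA 0 2 = w 0 2 * A 2 2 + w 0 3 * A 3 2 + w 0 4 * A 4 2,
      wA 0 3 = w 0 0 * A 0 3 + w 0 3 * A 3 3
    & wA 0 4 = w 0 0 * A 0 4 + w 0 1 * A 1 4 + w 0 2 * A 2 4 + w 0 4 * A 4 4].
Proof. by split; rewrite !mxE sum_ord5 !A_zeros !mulr0 ?addr0 ?add0r. Qed.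

Definition jac_generic (l : K) : bool :=
  [&& l - A 0 0 != 0, l - A 1 1 != 0, l - A 3 3 != 0 & l - A 4 4 != 0].

(* The expansion of det (l%:M - A) for A vanishing outside jac_pattern. *)
Definition jac_char (l : K) : K :=
  let c := A 1 0 * A 2 1 + A 2 0 * (l - A 1 1) in
  (l - A 0 0) * (l - A 1 1) * (l - A 2 2) * (l - A 3 3) * (l - A 4 4)
  - A 3 2 * A 0 3 * (l - A 4 4) * c
  - A 4 2 * (l - A 3 3)
    * (A 0 4 * c + A 1 4 * A 2 1 * (l - A 0 0) + A 2 4 * (l - A 0 0) * (l - A 1 1)).

(* Columns 1, 0, 3 and 4 of v *m A = l *: v determine v from v 0 2 = 1. *)
Definition jac_eigvec (l : K) : 'rV[K]_5 :=
  let v1 := A 2 1 / (l - A 1 1) in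
  let v0 := (A 1 0 * v1 + A 2 0) / (l - A 0 0) in
  \row_j [:: v0; v1; 1; A 0 3 * v0 / (l - A 3 3);
             (A 0 4 * v0 + A 1 4 * v1 + A 2 4) / (l - A 4 4)]`_j.

Lemma jac_eigvec_residual l : jac_generic l ->
  jac_eigvec l *m A - l *: jac_eigvec l =
  (- jac_char l / ((l - A 0 0) * (l - A 1 1) * (l - A 3 3) * (l - A 4 4)))
    *: delta_mx 0 2.
Proof.
move=> /and4P[n0 n1 n3 n4].
apply/rowP; apply: ord5P; rewrite !mxE sum_ord5 !A_zeros !mxE /=.
all: by rewrite /jac_char; field; rewrite n0 n1 n3 n4.
Qed.

Lemma jac_eigvecP l (w : 'rV[K]_5) : jac_generic l ->
  w *m A = l *: w -> w = w 0 2 *: jac_eigvec l.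
Proof.
move=> /and4P[n0 n1 n3 n4] wA.
have [c0 c1 _ c3 c4] := jac_mulmxE w; rewrite wA !mxE in c0 c1 c3 c4.
have solve (a x y : K) : l - a != 0 -> l * x = x * a + y -> x = y / (l - a).
  move=> na e; have -> : y = (l - a) * x by rewrite mulrBl e; ring.
  by rewrite [(l - a) * x]mulrC mulfK.
have e1 := solve _ _ _ n1 c1.
have e0 := solve _ _ _ n0 (etrans c0 (esym (addrA _ _ _))).
have e3 := solve _ _ _ n3 (etrans c3 (addrC _ _)).
have e4 := solve _ _ _ n4 (etrans c4 (addrC _ _)).
apply/rowP; apply: ord5P; rewrite !mxE /= ?e4 ?e3 ?e0 ?e1.
all: by field; rewrite ?n0 ?n1 ?n3 ?n4.
Qed.

Lemma eigenvalue_jac_char l : jac_generic l -> eigenvalue A l = (jac_char l == 0).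
Proof.
move=> gen; have res := jac_eigvec_residual gen.
have dn : (l - A 0 0) * (l - A 1 1) * (l - A 3 3) * (l - A 4 4) != 0.
  by case/and4P: gen => *; rewrite !mulf_neq0.
apply/eigenvalueP/idP => [[w wA w0] | /eqP char0].
  have ew := jac_eigvecP gen wA.
  have w2 : w 0 2 != 0 by apply: contraNneq w0 => w2; rewrite ew w2 scale0r.
  have : w 0 2 *: (jac_eigvec l *m A - l *: jac_eigvec l) = 0.
    by rewrite scalerBr scalemxAl -ew wA scalerA mulrC -scalerA -ew subrr.
  rewrite res scalerA => /rowP/(_ 2); rewrite !mxE /= mulr1 => /eqP.
  by rewrite mulf_eq0 (negPf w2) mulf_eq0 invr_eq0 (negPf dn) orbF oppr_eq0.
exists (jac_eigvec l).
  by apply/eqP; rewrite -subr_eq0 res char0 oppr0 mul0r scale0r.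
by apply/eqP => /rowP/(_ 2); rewrite !mxE /= => /eqP; rewrite oner_eq0.
Qed.

End SparseEigen.

Definition quartic (F : ringType) (a b c d z : F) : F :=
  z ^+ 4 + a * z ^+ 3 + b * z ^+ 2 + c * z + d.

Lemma hurwitz_quartic_bound (F : realFieldType) (a b c d : F) :
  0 < a -> 0 < c -> c ^+ 2 + a ^+ 2 * d < a * b * c -> 4 * d < b ^+ 2 + a * c.
Proof.
move=> a0 c0 h.
have a3c : 0 < a ^+ 3 * c by rewrite mulr_gt0 ?exprn_gt0.
have sq : 0 <= (a * b - 2 * c) ^+ 2 by rewrite sqr_ge0.
rewrite -subr_gt0 -(pmulr_rgt0 _ (exprn_gt0 2 a0)).
nra.
Qed.

Lemma hurwitz_sextic_lt0 (F : realFieldType) (a b c d x : F) :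
  0 < a -> 0 < b -> 0 < c -> c ^+ 2 + a ^+ 2 * d < a * b * c -> 0 <= x ->
  (4 * x ^+ 3 + 3 * a * x ^+ 2 + 2 * b * x + c) ^+ 2
  - (6 * x ^+ 2 + 3 * a * x + b) * (4 * x ^+ 3 + 3 * a * x ^+ 2 + 2 * b * x + c)
    * (4 * x + a)
  + quartic a b c d x * (4 * x + a) ^+ 2 < 0.
Proof.
move=> a0 b0 c0 hurwitz x0.
have k0 : 0 < b ^+ 2 + a * c - 4 * d by rewrite subr_gt0 (hurwitz_quartic_bound a0 c0).
have a0' := ltW a0; have b0' := ltW b0; have k0' := ltW k0.
have h1 : 0 <= a * (b ^+ 2 + a * c - 4 * d) * x by rewrite !mulr_ge0.
have h2 : 0 <= a ^+ 2 * b * x ^+ 2 by rewrite !mulr_ge0 ?exprn_ge0.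
have h3 : 0 <= (b ^+ 2 + a * c - 4 * d) * x ^+ 2 by rewrite !mulr_ge0 ?exprn_ge0.
have h4 : 0 <= a * b * x ^+ 3 by rewrite !mulr_ge0 ?exprn_ge0.
have h5 : 0 <= a ^+ 3 * x ^+ 3 by rewrite !mulr_ge0 ?exprn_ge0.
have h6 : 0 <= b * x ^+ 4 by rewrite !mulr_ge0 ?exprn_ge0.
have h7 : 0 <= a ^+ 2 * x ^+ 4 by rewrite !mulr_ge0 ?exprn_ge0.
have h8 : 0 <= a * x ^+ 5 by rewrite !mulr_ge0 ?exprn_ge0.
have h9 : 0 <= x ^+ 6 by rewrite !mulr_ge0 ?exprn_ge0.
rewrite /quartic; lra.
Qed.

Lemma quartic_gt0 (F : realFieldType) (a b c d x : F) :
  0 < a -> 0 < b -> 0 < c -> 0 < d -> 0 <= x -> 0 < quartic a b c d x.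
Proof.
move=> a0 b0 c0 d0 x0; rewrite /quartic.
have : 0 <= x ^+ 2 by rewrite exprn_ge0.
have : 0 <= x ^+ 3 by rewrite exprn_ge0.
have : 0 <= x ^+ 4 by rewrite exprn_ge0.
nra.
Qed.

Lemma quartic0 (F : ringType) (a b c d : F) : quartic a b c d 0 = d.
Proof. by rewrite /quartic !expr0n /= !mulr0 !add0r. Qed.

Lemma quartic_pos_root (F : rcfType) (a b c d u : F) :
  0 <= u -> d < 0 -> 0 <= quartic a b c d u ->
  exists2 t, 0 < t & quartic a b c d t = 0.
Proof.
move=> u0 d0 qu.
pose q : {poly F} := 'X^4 + a%:P * 'X^3 + b%:P * 'X^2 + c%:P * 'X + d%:P.
have qE t : q.[t] = quartic a b c d t by rewrite /q /quartic !hornerE.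
have : q.[0] <= 0 <= q.[u] by rewrite !qE quartic0 qu andbT ltW.
case/(poly_ivt u0) => t /andP[t0 _] /eqP; rewrite qE => qt.
exists t => //; rewrite lt_neqAle t0 andbT.
by apply: contra_eq_neq qt => <-; rewrite quartic0 lt_eqF.
Qed.

(* For z = x + iy with x >= 0, the imaginary part gives y = 0 or y^2 = N / M, and
   then the real part makes the negative sextic of hurwitz_sextic_lt0 vanish. *)
Lemma hurwitz_quartic_Re_lt0 (F : rcfType) (a b c d : F) (z : F[i]) :
  0 < a -> 0 < b -> 0 < c -> 0 < d -> c ^+ 2 + a ^+ 2 * d < a * b * c ->
  quartic (a%:C)%C (b%:C)%C (c%:C)%C (d%:C)%C z = 0 -> complex.Re z < 0.
Proof.
case: z => x y a0 b0 c0 d0 hurwitz.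
rewrite /quartic; move/eqP; rewrite eq_complex /= => /andP[/eqP hre /eqP him].
rewrite ltNge; apply/negP => x0.
set Y := y ^+ 2.
set N := 4 * x ^+ 3 + 3 * a * x ^+ 2 + 2 * b * x + c.
set M := 4 * x + a.
set T := 6 * x ^+ 2 + 3 * a * x + b.
have eRe : Y ^+ 2 - T * Y + quartic a b c d x = 0 by rewrite -hre /Y /T /quartic; ring.
have eIm : y * (N - M * Y) = 0 by rewrite -him /Y /N /M; ring.
have [y0|y0] := eqVneq y 0.
  move: eRe; rewrite /Y y0 expr0n /= mulr0 subr0 expr0n add0r => /eqP.
  by rewrite gt_eqF // quartic_gt0.
have NMY : N = M * Y.
  by apply/eqP; rewrite -subr_eq0; move/eqP: eIm; rewrite mulf_eq0 (negPf y0).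
have := hurwitz_sextic_lt0 a0 b0 c0 hurwitz x0; rewrite -/N -/M -/T.
have -> : N ^+ 2 - T * N * M + quartic a b c d x * M ^+ 2
          = M ^+ 2 * (Y ^+ 2 - T * Y + quartic a b c d x) by rewrite NMY; ring.
by rewrite eRe mulr0 ltxx.
Qed.

(* Arithmetic on R elaborates partly to the Stdlib operations, convertible to but
   syntactically distinct from the MathComp ones: RstdE rewrites into MathComp form
   for ring/field/lra, stdlib_arith back for Stdlib's Lra, whose IZR numerals are
   binary (MathComp numerals n%:R are unary). *)
Definition RstdE := (RplusE, RminusE, RmultE, RoppE, RinvE, RdivE, RpowE, R0E, R1E).

Ltac stdlib_arith := rewrite -?RplusE -?RoppE -?RmultE -?RinvE -?RpowE -?R0E -?R1E.

Ltac positivity := repeat first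
  [assumption | apply: divr_gt0 | apply: mulr_gt0 | apply: addr_gt0 | apply: exprn_gt0].

Section EndemicEquilibria.
Variable p : params.
Local Notation Lambda := (pLambda p). Local Notation beta := (pbeta p).
Local Notation D := (pD p). Local Notation mu := (pmu p).
Local Notation psi := (ppsi p). Local Notation w := (pw p).
Local Notation sigma := (psigma p). Local Notation gamma := (pgamma p).
Local Notation eta := (peta p). Local Notation delta := (pdelta p).

Definition steady_state_of_B (B : R) : state :=
  let g := B / (B + D) in
  let I := delta * B / eta in
  let Rc := gamma * I / (mu + w) in
  let S := (Lambda + w * Rc) / (beta * g + mu + psi) in
  State S (psi * S / (sigma * beta * g + mu)) I Rc B.

Definition endemic_poly (B : R) : R :=
  (mu + gamma) * delta * (mu + w)
    * (beta * B + (mu + psi) * (B + D)) * (sigma * beta * B + mu * (B + D))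
  - beta * (Lambda * eta * (mu + w) + w * gamma * delta * B)
    * (sigma * beta * B + (mu + sigma * psi) * (B + D)).

Hypothesis p_pos : params_pos p.

Lemma endemic_poly0 :
  endemic_poly 0 = (mu + w) * D ^+ 2 * mu * (mu + psi) * delta * (mu + gamma)
                   * (1 - basic_repr_ratio p).
Proof.
have [L0 [b0 [D0 [m0 [ps0 [w0 [s0 [g0 [e0 d0]]]]]]]]] := p_pos.
rewrite /endemic_poly /basic_repr_ratio /S0 /V0 !RstdE; field.
by rewrite !lt0r_neq0 ?addr_gt0.
Qed.

Lemma steady_state_of_B_pos B : 0 < B -> state_pos (steady_state_of_B B).
Proof.
move=> B0; have [L0 [b0 [D0 [m0 [ps0 [w0 [s0 [g0 [e0 d0]]]]]]]]] := p_pos.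
by rewrite /state_pos /=; repeat split; positivity.
Qed.

Lemma basic_repr_ratio_lt1 : 0 < endemic_poly 0 -> basic_repr_ratio p < 1.
Proof.
rewrite endemic_poly0 pmulr_rgt0 ?subr_gt0 //.
have [L0 [b0 [D0 [m0 [ps0 [w0 [s0 [g0 [e0 d0]]]]]]]]] := p_pos.
by positivity.
Qed.

Lemma steady_state_denoms_gt0 B : 0 <= B ->
  [/\ 0 < B + D, 0 < beta * B + (mu + psi) * (B + D)
    & 0 < sigma * beta * B + mu * (B + D)].
Proof.
move=> B0; have [L0 [b0 [D0 [m0 [ps0 [w0 [s0 [g0 [e0 d0]]]]]]]]] := p_pos.
have BD : 0 < B + D by lra.
have bB := mulr_ge0 (ltW b0) B0; have sbB := mulr_ge0 (ltW (mulr_gt0 s0 b0)) B0.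
have := mulr_gt0 (addr_gt0 m0 ps0) BD; have := mulr_gt0 m0 BD.
by split=> //; lra.
Qed.

Lemma steady_state_of_B_eqs B : 0 <= B ->
  let s := steady_state_of_B B in
  [/\ fS p s = 0, fV p s = 0, fR p s = 0 & fB p s = 0].
Proof.
have [L0 [b0 [D0 [m0 [ps0 [w0 [s0 [g0 [e0 d0]]]]]]]]] := p_pos.
move=> /steady_state_denoms_gt0[BD u0 v0].
rewrite /fS /fV /fR /fB /= !RstdE; split; field.
all: by rewrite ?lt0r_neq0 //; lra.
Qed.

Lemma fI_steady_state_of_B B : 0 <= B ->
  fI p (steady_state_of_B B) =
  - B * endemic_poly B / (eta * (mu + w) * (beta * B + (mu + psi) * (B + D))
                          * (sigma * beta * B + mu * (B + D))).
Proof.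
have [L0 [b0 [D0 [m0 [ps0 [w0 [s0 [g0 [e0 d0]]]]]]]]] := p_pos.
move=> /steady_state_denoms_gt0[BD u0 v0].
rewrite /fI /endemic_poly /= !RstdE; field.
by rewrite ?lt0r_neq0 //; lra.
Qed.

Lemma positive_steady_stateE x :
  positive_steady_state p x -> x = steady_state_of_B (xB x).
Proof.
case: x => S V I Rc B [[/= hS [hV [_ [hR hB]]]] [_ [_ [_ [_ /= pB]]]]].
have [L0 [b0 [D0 [m0 [ps0 [w0 [s0 [g0 [e0 d0]]]]]]]]] := p_pos.
have [BD u0 v0] := steady_state_denoms_gt0 (ltW pB).
rewrite /fS /fV /fR /fB /= !RstdE in hS hV hR hB.
have eI : delta * B / eta = I.
  have -> : delta * B = eta * I by lra.
  by field; rewrite lt0r_neq0.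
have eR : gamma * I / (mu + w) = Rc.
  have -> : gamma * I = (mu + w) * Rc by lra.
  by field; rewrite lt0r_neq0 ?addr_gt0.
have eS : (Lambda + w * Rc) / (beta * (B / (B + D)) + mu + psi) = S.
  have -> : Lambda + w * Rc = (beta * (B / (B + D)) + mu + psi) * S by lra.
  by field; rewrite ?lt0r_neq0 //; lra.
have eV : psi * S / (sigma * beta * (B / (B + D)) + mu) = V.
  have -> : psi * S = (sigma * beta * (B / (B + D)) + mu) * V by lra.
  by field; rewrite ?lt0r_neq0 //; lra.
by rewrite /steady_state_of_B /= !RstdE eI eR eS eV.
Qed.

Lemma positive_steady_stateP x :
  positive_steady_state p x <->
  [/\ 0 < xB x, endemic_poly (xB x) = 0 & x = steady_state_of_B (xB x)].
Proof.
have denom_neq0 B : 0 < B -> eta * (mu + w) * (beta * B + (mu + psi) * (B + D))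
                               * (sigma * beta * B + mu * (B + D)) != 0.
  have [L0 [b0 [D0 [m0 [ps0 [w0 [s0 [g0 [e0 d0]]]]]]]]] := p_pos.
  move=> /ltW /steady_state_denoms_gt0[_ u0 v0].
  by apply: lt0r_neq0; positivity.
split=> [xss | [B0 E0 xE]].
  have B0 : 0 < xB x by case: xss => _ [_ [_ [_ [_ ?]]]].
  have xE := positive_steady_stateE xss; split=> //.
  have := fI_steady_state_of_B (ltW B0).
  rewrite -xE (proj1 (proj2 (proj2 xss.1))) => /esym/eqP.
  rewrite mulf_eq0 invr_eq0 (negPf (denom_neq0 _ B0)) orbF.
  by rewrite mulf_eq0 oppr_eq0 (gt_eqF B0) => /eqP.
have [fS0 fV0 fR0 fB0] := steady_state_of_B_eqs (ltW B0).
have := fI_steady_state_of_B (ltW B0); rewrite E0 mulr0 mul0r => fI0.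
by rewrite xE; split; [split | exact: steady_state_of_B_pos].
Qed.

End EndemicEquilibria.

Lemma jacobian_pattern p x (i j : 'I_5) : ~~ jac_pattern i j -> jacobian p x i j = 0.
Proof.
by rewrite mxE; case: i j => [[|[|[|[|[|i]]]]] hi] [[|[|[|[|[|j]]]]] hj].
Qed.

Lemma jacobianCE p x (i j : 'I_5) : jacobianC p x i j = (jacobian p x i j)%:C%C.
Proof. by rewrite [LHS]mxE. Qed.

Lemma jacobianC_pattern p x (i j : 'I_5) : ~~ jac_pattern i j -> jacobianC p x i j = 0.
Proof. by move=> ij; rewrite jacobianCE jacobian_pattern. Qed.

Lemma jacobian_diag_lt0 p x : params_pos p -> state_pos x ->
  [/\ jacobian p x 0 0 < 0, jacobian p x 1 1 < 0, jacobian p x 3 3 < 0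
    & jacobian p x 4 4 < 0].
Proof.
case=> _ [b0 [D0 [m0 [ps0 [w0 [s0 [_ [_ d0]]]]]]]] [_ [_ [_ [_ B0]]]].
have g0 : 0 <= xB x / (xB x + pD p) by rewrite ltW // divr_gt0 // addr_gt0.
have := mulr_ge0 (ltW b0) g0; have := mulr_ge0 (ltW (mulr_gt0 s0 b0)) g0.
by rewrite !mxE /=; split; lra.
Qed.

Lemma jacobian_generic p x t : params_pos p -> state_pos x -> 0 <= t ->
  jac_generic (jacobian p x) t.
Proof.
move=> pp xp t0; have [a0 a1 a3 a4] := jacobian_diag_lt0 pp xp.
by apply/and4P; split; rewrite lt0r_neq0 // subr_gt0; lra.
Qed.

Lemma jacobianC_generic p x z : params_pos p -> state_pos x -> 0 <= complex.Re z ->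
  jac_generic (jacobianC p x) z.
Proof.
case: z => u v pp xp /= u0; have [a0 a1 a3 a4] := jacobian_diag_lt0 pp xp.
apply/and4P; split; rewrite jacobianCE; apply/eqP => /eqP;
  rewrite eq_complex /= => /andP[/eqP re0 _]; lra.
Qed.

Lemma stable_ss_hurwitz p x (a b c d : R) :
  params_pos p -> state_pos x ->
  0 < a -> 0 < b -> 0 < c -> 0 < d -> c ^+ 2 + a ^+ 2 * d < a * b * c ->
  (forall z, jac_char (jacobianC p x) z =
             (z + (pmu p)%:C%C) * quartic (a%:C)%C (b%:C)%C (c%:C)%C (d%:C)%C z) ->
  stable_ss p x.
Proof.
move=> pp xp a0 b0 c0 d0 hw char_fact l; apply: contraTT; rewrite -leNgt => Rl.
rewrite (eigenvalue_jac_char (@jacobianC_pattern p x)) ?jacobianC_generic //.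
rewrite char_fact mulf_eq0 negb_or; apply/andP; split.
  case: l Rl => u v /= u0; rewrite eq_complex /= negb_and; apply/orP; left.
  by case: pp => _ [_ [_ [m0 _]]]; rewrite gt_eqF //; lra.
by apply/negP => /eqP /(hurwitz_quartic_Re_lt0 a0 b0 c0 d0 hw); rewrite ltNge Rl.
Qed.

Lemma unstable_ss_of_root p x t : params_pos p -> state_pos x -> 0 < t ->
  jac_char (jacobian p x) t = 0 -> unstable_ss p x.
Proof.
move=> pp xp t0 char0; exists (t%:C)%C; split=> //.
have -> : jacobianC p x = map_mx (real_complex R) (jacobian p x) by [].
rewrite eigenvalue_map (eigenvalue_jac_char (@jacobian_pattern p x)) ?char0 //.
exact/jacobian_generic/ltW.
Qed.

Definition p0 : params :=
  Params (2779 / 8800) 10 6 (1 / 10) 1 (3434 / 35) (1 / 10) 10 (101 / 30) (1 / 3).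
Definition B1 : R := 5.
Definition B2 : R := 1 / 10.
Definition x1 : state := steady_state_of_B p0 B1.
Definition x2 : state := steady_state_of_B p0 B2.

Lemma p0_pos : params_pos p0.
Proof. by rewrite /params_pos /=; repeat split; apply/RltP; stdlib_arith; Lra.lra. Qed.

Definition endemic_lead : R := 12625 / 112.

Lemma endemic_poly_p0 B : endemic_poly p0 B = endemic_lead * (B - B1) * (B - B2).
Proof. rewrite /endemic_poly /endemic_lead /B1 /B2 /=; stdlib_arith; Lra.lra. Qed.

Lemma positive_steady_state_p0 x : positive_steady_state p0 x <-> x = x1 \/ x = x2.
Proof.
have lead0 : endemic_lead != 0 by rewrite /endemic_lead; apply/eqP; stdlib_arith; Lra.lra.
have B10 : 0 < B1 by rewrite /B1; apply/RltP; stdlib_arith; Lra.lra.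
have B20 : 0 < B2 by rewrite /B2; apply/RltP; stdlib_arith; Lra.lra.
rewrite (positive_steady_stateP p0_pos) endemic_poly_p0.
split=> [[_ /eqP] | [-> | ->]]; last 2 first.
- by split; rewrite //= subrr mulr0 mul0r.
- by split; rewrite //= subrr mulr0.
by rewrite 2!mulf_eq0 (negPf lead0) !subr_eq0 /= => /orP[] /eqP -> ->; [left | right].
Qed.

Definition a1 : R := 24097 / 210.
Definition b1 : R := 429811121 / 254100.
Definition c1 : R := 368179 / 165.
Definition d1 : R := 441875 / 1936.

Lemma jac_char_x1 z : jac_char (jacobianC p0 x1) z =
  (z + (pmu p0)%:C%C) * quartic (a1%:C)%C (b1%:C)%C (c1%:C)%C (d1%:C)%C z.
Proof.
case: z => u v; apply/eqP; rewrite eq_complex; apply/andP; split; apply/eqP.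
all: rewrite /jac_char /quartic !jacobianCE !mxE /= /a1 /b1 /c1 /d1 /B1.
all: stdlib_arith; Lra.lra.
Qed.

Lemma x1_stable : stable_ss p0 x1.
Proof.
have [_ x1_pos] := (positive_steady_state_p0 x1).2 (or_introl erefl).
apply: (stable_ss_hurwitz p0_pos x1_pos _ _ _ _ _ jac_char_x1);
  rewrite /a1 /b1 /c1 /d1; apply/RltP; stdlib_arith; Lra.lra.
Qed.

Definition a2 : R := 1408177 / 12810.
Definition b2 : R := 9094684301 / 7814100.
Definition c2 : R := 28463206807 / 24558600.
Definition d2 : R := - (441875 / 29768).

Lemma jac_char_x2 t : jac_char (jacobian p0 x2) t = (t + pmu p0) * quartic a2 b2 c2 d2 t.
Proof.
rewrite /jac_char /quartic !mxE /= /a2 /b2 /c2 /d2 /B2.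
stdlib_arith; Lra.lra.
Qed.

Lemma x2_unstable : unstable_ss p0 x2.
Proof.
have [_ x2_pos] := (positive_steady_state_p0 x2).2 (or_intror erefl).
have [|||t t0 qt] := @quartic_pos_root _ a2 b2 c2 d2 1.
- exact: ler01.
- by rewrite /d2; apply/RltP; stdlib_arith; Lra.lra.
- by rewrite /quartic /a2 /b2 /c2 /d2; apply/RleP; stdlib_arith; Lra.lra.
by apply: (unstable_ss_of_root p0_pos x2_pos t0); rewrite jac_char_x2 qt mulr0.
Qed.

Lemma basic_repr_ratio_p0_lt1 : basic_repr_ratio p0 < 1.
Proof.
apply: (basic_repr_ratio_lt1 p0_pos); rewrite endemic_poly_p0 /endemic_lead /B1 /B2.
by apply/RltP; stdlib_arith; Lra.lra.
Qed.

Lemma x1_neq_x2 : x1 <> x2.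
Proof. by move/(congr1 xB); rewrite /= /B1 /B2; stdlib_arith; Lra.lra. Qed.

Theorem theorem2 :
  exists p : params,
    params_pos p /\ basic_repr_ratio p < 1 /\
    exists x1 x2 : state,
      x1 <> x2 /\
      positive_steady_state p x1 /\ positive_steady_state p x2 /\
      (forall x : state, positive_steady_state p x -> x = x1 \/ x = x2) /\
      stable_ss p x1 /\ unstable_ss p x2.
Proof.
exists p0; split; first exact: p0_pos.
split; first exact: basic_repr_ratio_p0_lt1.
exists x1, x2; split; first exact: x1_neq_x2.
split; first by apply/positive_steady_state_p0; left.
split; first by apply/positive_steady_state_p0; right.
split; first by move=> x /positive_steady_state_p0.
by split; [exact: x1_stable | exact: x2_unstable].
Qed.
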